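(* Consider a graphical constant-sum game with a fully-mixed Nash equilibrium $\hat{\mathbf{x}}^*=(\mathbf{x}^*_1,\ldots,\mathbf{x}^*_m)$, and suppose each agent $i$ uses a learning dynamic whose learning operator with shift $\mathbf{x}^*_i$ is finitely lossless via a storage function $L^i$, so that the merged learning operator with shift $\hat{\mathbf{x}}^*$ is finitely lossless via $L_1(\hat{\mathbf{q}})=\sum_iL^i(\mathbf{q}_i)$. Then the feedback interconnection system of this merged learning operator with the game operator with shift $\hat{\mathbf{x}}^*$ is finitely lossless via the storage function $L_1$: for every initial state, every external input $\mathbf{r}$ and every $t\ge0$, $L_1(\hat{\mathbf{q}}(t))=L_1(\hat{\mathbf{q}}(0))+\int_0^t\langle\mathbf{r}(\tau),\hat{\mathbf{x}}(\tau)-\hat{\mathbf{x}}^*\rangle\,d\tau$. In particular, when $\mathbf{r}\equiv\mathbf{0}$, $L_1(\hat{\mathbf{q}}(t))$ is constant in $t$.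
   Context: Agent $i\in\{1,\ldots,m\}$ has $n_i$ actions; $\Delta^{n}=\{\mathbf{x}\in\mathbb{R}^n:x_j\ge0,\sum_jx_j=1\}$, $\Delta=\prod_i\Delta^{n_i}$. A graphical game has matrices $\mathbf{A}^{ik}\in\mathbb{R}^{n_i\times n_k}$ ($i\ne k$); agent $i$'s payoff vector is $\mathbf{p}_i=\sum_{k\neq i}\mathbf{A}^{ik}\mathbf{x}_k$ and payoff $\langle\mathbf{x}_i,\mathbf{p}_i\rangle$; it is constant-sum if $\mathbf{A}^{ik}_{j\ell}+\mathbf{A}^{ki}_{\ell j}=c^{\{i,k\}}$ for constants $c^{\{i,k\}}$ and all $j,\ell$. A Nash equilibrium $\hat{\mathbf{x}}^*\in\Delta$ has each $\mathbf{x}^*_i$ a best response to the others; fully mixed means all entries positive. A learning dynamic over $n$ actions has conversion function $f:\mathbb{R}^n\to\Delta^n$, state $\mathbf{q}(t)=\mathbf{q}^0+\int_0^t\mathbf{u}(\tau)d\tau$ for input $\mathbf{u}$, and strategy $\mathbf{x}=f(\mathbf{q})$; its learning operator with shift $\mathbf{x}^*$ outputs $\mathbf{x}-\mathbf{x}^*$ and is finitely lossless via $L$ if $L$ is bounded below and $L(\mathbf{q}(t))=L(\mathbf{q}^0)+\int_0^t\langle\mathbf{u},\mathbf{x}-\mathbf{x}^*\rangle d\tau$ for all initial states, inputs and $t$. The merged learning operator concatenates the agents' operators (input $\hat{\mathbf{u}}$, state $\hat{\mathbf{q}}$, output $\hat{\mathbf{x}}-\hat{\mathbf{x}}^*$).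 The game operator with shift $\hat{\mathbf{x}}^*$ maps input $\hat{\mathbf{x}}-\hat{\mathbf{x}}^*$ to output $-\hat{\mathbf{p}}$. The feedback interconnection system with external input $\mathbf{r}$ is defined by: the merged learning operator's input is $\hat{\mathbf{u}}=\mathbf{r}-(-\hat{\mathbf{p}})=\mathbf{r}+\hat{\mathbf{p}}$, its output $\hat{\mathbf{x}}-\hat{\mathbf{x}}^*$ is the game operator's input, and $\hat{\mathbf{p}}$ is computed from $\hat{\mathbf{x}}$ by the game; the system's output is $\hat{\mathbf{x}}-\hat{\mathbf{x}}^*$. Solutions are assumed to exist and be unique. *)

From HB Require Import structures.
From mathcomp Require Import all_boot all_order all_algebra.
From mathcomp Require Import all_classical all_reals.
From mathcomp Require Import interval_inference topology normedtype sequences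
  measure lebesgue_measure lebesgue_integral.
Unset Printing Implicit Defensive.
Import Order.TTheory GRing.Theory Num.Theory.
Local Open Scope classical_set_scope.
Local Open Scope ring_scope.

Section Defs.
Variable R : realType.
Implicit Types k : nat.

Definition dotv {k : nat} (x y : 'I_k -> R) : R := \sum_(j < k) x j * y j.

Definition subv {k : nat} (x y : 'I_k -> R) : 'I_k -> R := fun j => x j - y j.

Definition in_simplex {k : nat} (x : 'I_k -> R) : Prop :=
  (forall j, 0 <= x j) /\ \sum_(j < k) x j = 1.

Definition integrable_0t (t : R) (g : R -> R) : Prop :=
  (@lebesgue_measure R).-integrable `[0, t] (EFin \o g).

Definition integral_0t (t : R) (g : R -> R) : R :=
  Rintegral (@lebesgue_measure R) `[0, t] g.

Definition admissible_input {k : nat} (u : R -> 'I_k -> R) : Prop :=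
  forall t, 0 <= t -> forall j, integrable_0t t (fun s => u s j).

Definition ld_state {k : nat} (q0 : 'I_k -> R) (u : R -> 'I_k -> R) :
  R -> 'I_k -> R :=
  fun t j => q0 j + integral_0t t (fun s => u s j).

(** the learning operator of conversion function f with shift xs
    (input u, output f(q) - xs) is finitely lossless via L *)
Definition finitely_lossless {k : nat} (f : ('I_k -> R) -> ('I_k -> R))
    (xs : 'I_k -> R) (L : ('I_k -> R) -> R) : Prop :=
  (exists c : R, forall q, c <= L q) /\
  forall (q0 : 'I_k -> R) (u : R -> 'I_k -> R), admissible_input u ->
  forall t, 0 <= t ->
    integrable_0t t (fun s => dotv (u s) (subv (f (ld_state q0 u s)) xs)) /\
    L (ld_state q0 u t) =
      L q0 + integral_0t t (fun s => dotv (u s) (subv (f (ld_state q0 u s)) xs)).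

(** graphical games with m agents, agent i having n i actions *)
Variables (m : nat) (n : 'I_m -> nat).

Definition profile := forall i : 'I_m, 'I_(n i) -> R.

Definition game := forall i k : 'I_m, 'I_(n i) -> 'I_(n k) -> R.

Definition payoff_vec (A : game) (x : profile) (i : 'I_m) : 'I_(n i) -> R :=
  fun j => \sum_(k < m | k != i) \sum_(l < n k) A i k j l * x k l.

Definition constant_sum (A : game) : Prop :=
  forall i k : 'I_m, i != k ->
    exists c : R, forall j l, A i k j l + A k i l j = c.

Definition in_Delta (x : profile) : Prop := forall i, in_simplex (x i).

Definition nash_eq (A : game) (xs : profile) : Prop :=
  in_Delta xs /\
  forall i (y : 'I_(n i) -> R), in_simplex y ->
    dotv y (payoff_vec A xs i) <= dotv (xs i) (payoff_vec A xs i).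

Definition fully_mixed (xs : profile) : Prop := forall i j, 0 < xs i j.

Definition merged_storage (L : forall i : 'I_m, ('I_(n i) -> R) -> R)
  (q : profile) : R := \sum_(i < m) L i (q i).

Definition strat_traj (f : forall i : 'I_m, ('I_(n i) -> R) -> ('I_(n i) -> R))
  (q : R -> profile) : R -> profile := fun s i => f i (q s i).

Definition closed_loop_input (A : game)
  (f : forall i : 'I_m, ('I_(n i) -> R) -> ('I_(n i) -> R))
  (r q : R -> profile) : R -> profile :=
  fun s i j => r s i j + payoff_vec A (strat_traj f q s) i j.

(** q is a solution (for t >= 0) of the feedback interconnection of the
    merged learning operator with the game operator, with external input r *)
Definition feedback_solution (A : game)
  (f : forall i : 'I_m, ('I_(n i) -> R) -> ('I_(n i) -> R))
  (r q : R -> profile) : Prop :=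
  (forall i, admissible_input (fun s => closed_loop_input A f r q s i)) /\
  forall t, 0 <= t -> forall i j,
    q t i j = q 0 i j + integral_0t t (fun s => closed_loop_input A f r q s i j).

End Defs.

Arguments dotv {R k} x y.
Arguments subv {R k} x y _.
Arguments in_simplex {R k} x.
Arguments integrable_0t {R} t g.
Arguments integral_0t {R} t g.
Arguments admissible_input {R k} u.
Arguments ld_state {R k} q0 u _ _.
Arguments finitely_lossless {R k} f xs L.
Arguments payoff_vec {R m n} A x i _.
Arguments constant_sum {R m n} A.
Arguments in_Delta {R m n} x.
Arguments nash_eq {R m n} A xs.
Arguments fully_mixed {R m n} xs.
Arguments merged_storage {R m n} L q.
Arguments strat_traj {R m n} f q _ _ _.
Arguments closed_loop_input {R m n} A f r q _ i _.
Arguments feedback_solution {R m n} A f r q.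

(** The merged learning operator is lossless with supply [<u, x - x*>], where
    the closed-loop input is [u = r + p].  At a fully mixed equilibrium of a
    constant-sum game every pure strategy is a best response, so the total
    payoff of [x*] against any profile in [Delta] is the same, and
    constant-sumness makes [B(x,y) + B(y,x)] constant on [Delta x Delta]
    ([B] the total payoff of [x] against [y]).  Together these give
    [sum_i <p_i(x), x_i - x*_i> = 0], i.e. the game operator absorbs no
    supply, so only the external part [<r, x - x*>] survives in the storage
    balance. *)
From mathcomp Require Import all_boot all_order all_algebra.
From mathcomp Require Import all_classical all_reals.
From mathcomp Require Import interval_inference topology normedtype sequences
  measure lebesgue_measure lebesgue_integral.
From mathcomp Require Import ring lra.
Import Order.TTheory GRing.Theory Num.Theory.
Local Open Scope ring_scope.

Section Rintegral_sum.
Context d (T : measurableType d) (R : realType).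
Variables (mu : {measure set T -> \bar R}) (D : set T) (mD : measurable D).
Variables (I : Type) (h : I -> T -> R).
Hypothesis inth : forall i, mu.-integrable D (EFin \o h i).

Lemma integrable_Rsum (s : seq I) :
  mu.-integrable D (EFin \o (fun x => \sum_(i <- s) h i x)).
Proof.
have -> : EFin \o (fun x => \sum_(i <- s) h i x) = fun x => \sum_(i <- s) (h i x)%:E.
  by apply/funext => x /=; rewrite sumEFin.
by apply: (integrable_sum mD) => i _; exact: inth.
Qed.

Lemma Rintegral_sum (s : seq I) :
  \int[mu]_(x in D) (\sum_(i <- s) h i x) = \sum_(i <- s) \int[mu]_(x in D) h i x.
Proof.
elim: s => [|i s IH].
  by under eq_Rintegral do rewrite big_nil; rewrite Rintegral_cst // mul0r big_nil.
under eq_Rintegral do rewrite big_cons.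
by rewrite RintegralD // ?big_cons ?IH //; exact: integrable_Rsum.
Qed.

End Rintegral_sum.

Section Simplex.
Context {R : realType} {k : nat}.
Implicit Types (x y v : 'I_k -> R).

Lemma dotvC x y : dotv x y = dotv y x.
Proof. by apply: eq_bigr => j _; rewrite mulrC. Qed.

Lemma dotvDl x y v : dotv (fun j => x j + y j) v = dotv x v + dotv y v.
Proof. by rewrite /dotv -big_split; apply: eq_bigr => j _; rewrite mulrDl. Qed.

Lemma dotvBr v x y : dotv v (subv x y) = dotv v x - dotv v y.
Proof. by rewrite /dotv -sumrB; apply: eq_bigr => j _; rewrite mulrBr. Qed.

Lemma dotv_unitl (j0 : 'I_k) v : dotv (fun j => (j == j0)%:R) v = v j0.
Proof.
rewrite /dotv (bigD1 j0) //= eqxx mul1r big1 ?addr0 // => j /negbTE ->.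
by rewrite mul0r.
Qed.

Lemma in_simplex_unit (j0 : 'I_k) : in_simplex (fun j => (j == j0)%:R : R).
Proof.
split=> [j|]; first by case: (j == j0).
by rewrite (bigD1 j0) //= eqxx big1 ?addr0 // => j /negbTE ->.
Qed.

Lemma dotv_simplex_cst y v c : in_simplex y -> (forall j, v j = c) -> dotv y v = c.
Proof.
by move=> [_ y1] vc; rewrite /dotv; under eq_bigr do rewrite vc; rewrite -mulr_suml y1 mul1r.
Qed.

(* A maximiser of [y |-> <y, v>] over the simplex with full support forces
   [v] to be constant: otherwise mass on a suboptimal coordinate is wasted. *)
Lemma fully_mixed_argmax_cst x v :
  in_simplex x -> (forall j, 0 < x j) ->
  (forall y, in_simplex y -> dotv y v <= dotv x v) ->
  forall j, v j = dotv x v.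
Proof.
move=> [_ x1] xpos xmax j.
have v_le j0 : v j0 <= dotv x v by rewrite -dotv_unitl; exact: xmax (in_simplex_unit j0).
have gap0 : \sum_(j0 < k) x j0 * (dotv x v - v j0) = 0.
  under eq_bigr do rewrite mulrBr.
  by rewrite sumrB -mulr_suml x1 mul1r subrr.
have gap_ge0 j0 : true -> 0 <= x j0 * (dotv x v - v j0).
  by move=> _; rewrite mulr_ge0 ?subr_ge0 // ltW.
move: (psumr_eq0P gap_ge0 gap0 (i := j) isT) => /eqP.
by rewrite mulf_eq0 gt_eqF //= subr_eq0 => /eqP.
Qed.

End Simplex.

Section ConstantSumGame.
Variables (R : realType) (m : nat) (n : 'I_m -> nat) (A : game R m n).
Implicit Types x y : profile R m n.

Definition cross_payoff x y : R := \sum_(i < m) dotv (x i) (payoff_vec A y i).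

Lemma cross_payoffE x y : cross_payoff x y = \sum_(i < m) \sum_(k < m)
  (k != i)%:R * \sum_(j < n i) \sum_(l < n k) x i j * A i k j l * y k l.
Proof.
apply: eq_bigr => i _; rewrite /dotv /payoff_vec.
under eq_bigr do rewrite big_mkcond mulr_sumr.
rewrite exchange_big /=; apply: eq_bigr => k _.
rewrite mulr_sumr; apply: eq_bigr => j _.
case: (k != i) => /=; last by rewrite !mul0r mulr0.
by rewrite mul1r mulr_sumr; apply: eq_bigr => l _; rewrite mulrA.
Qed.

Lemma cross_payoff_symE x y : cross_payoff x y + cross_payoff y x =
  \sum_(i < m) \sum_(k < m) (k != i)%:R *
    \sum_(j < n i) \sum_(l < n k) x i j * y k l * (A i k j l + A k i l j).
Proof.
rewrite !cross_payoffE [X in _ + X]exchange_big /= -big_split.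
apply: eq_bigr => i _; rewrite -big_split; apply: eq_bigr => k _ /=.
rewrite [X in _ + _ * X]exchange_big /= [i == k]eq_sym -mulrDr; congr (_ * _).
rewrite -big_split; apply: eq_bigr => j _.
by rewrite -big_split; apply: eq_bigr => l _ /=; ring.
Qed.

Lemma constant_sum_cross_payoff_sym {x y x' y'} : constant_sum A ->
  in_Delta x -> in_Delta y -> in_Delta x' -> in_Delta y' ->
  cross_payoff x y + cross_payoff y x = cross_payoff x' y' + cross_payoff y' x'.
Proof.
move=> Acs Dx Dy Dx' Dy'; rewrite !cross_payoff_symE.
apply: eq_bigr => i _; apply: eq_bigr => k _.
have [ki|] := boolP (k != i); last by rewrite !mul0r.
rewrite eq_sym in ki; have [c Ac] := Acs i k ki.
have pair_cst (u w : profile R m n) : in_Delta u -> in_Delta w ->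
    \sum_(j < n i) \sum_(l < n k) u i j * w k l * (A i k j l + A k i l j) = c.
  move=> /(_ i) [_ u1] /(_ k) [_ w1].
  transitivity (\sum_(j < n i) u i j * (\sum_(l < n k) w k l) * c).
    apply: eq_bigr => j _; rewrite mulr_sumr mulr_suml.
    by apply: eq_bigr => l _; rewrite Ac.
  by rewrite -!mulr_suml u1 w1 !mul1r.
by rewrite !pair_cst.
Qed.

Lemma fully_mixed_nash_indifferent {xs x} :
  nash_eq A xs -> fully_mixed xs -> in_Delta x ->
  cross_payoff x xs = cross_payoff xs xs.
Proof.
move=> [Dxs xs_best] xs_pos Dx; apply: eq_bigr => i _.
apply: dotv_simplex_cst; first exact: Dx.
exact: fully_mixed_argmax_cst (Dxs i) (xs_pos i) (@xs_best i).
Qed.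

Lemma payoff_supply_eq0 xs x :
  constant_sum A -> nash_eq A xs -> fully_mixed xs -> in_Delta x ->
  \sum_(i < m) dotv (payoff_vec A x i) (subv (x i) (xs i)) = 0.
Proof.
move=> Acs xs_nash xs_pos Dx; have Dxs := xs_nash.1.
have -> : \sum_(i < m) dotv (payoff_vec A x i) (subv (x i) (xs i)) =
    cross_payoff x x - cross_payoff xs x.
  by rewrite -sumrB; apply: eq_bigr => i _; rewrite dotvBr !(dotvC (payoff_vec A x i)).
have := constant_sum_cross_payoff_sym Acs Dx Dx Dxs Dxs.
have := constant_sum_cross_payoff_sym Acs Dxs Dx Dxs Dxs.
rewrite (fully_mixed_nash_indifferent xs_nash xs_pos Dx); lra.
Qed.

End ConstantSumGame.

Section Feedback.
Variables (R : realType) (m : nat) (n : 'I_m -> nat) (A : game R m n).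
Variables (xs : profile R m n) (f : forall i : 'I_m, ('I_(n i) -> R) -> ('I_(n i) -> R)).
Variables (r q : R -> profile R m n).

Definition loop_supply (i : 'I_m) (s : R) : R :=
  dotv (closed_loop_input A f r q s i) (subv (strat_traj f q s i) (xs i)).

Lemma loop_supply_sum s :
  constant_sum A -> nash_eq A xs -> fully_mixed xs -> (forall i p, in_simplex (f i p)) ->
  \sum_(i < m) loop_supply i s = \sum_(i < m) dotv (r s i) (subv (strat_traj f q s i) (xs i)).
Proof.
move=> Acs xs_nash xs_pos f_simplex; rewrite /loop_supply /closed_loop_input.
under eq_bigr do rewrite dotvDl.
by rewrite big_split /= payoff_supply_eq0 ?addr0 // => i; exact: f_simplex.
Qed.

Hypothesis q_sol : feedback_solution A f r q.

Lemma feedback_ld_state i s : 0 <= s ->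
  ld_state (q 0 i) (fun s => closed_loop_input A f r q s i) s = q s i.
Proof. by move=> s0; apply: funext => j; rewrite /ld_state (q_sol.2 s s0 i j). Qed.

Lemma feedback_storage_balance i (L : ('I_(n i) -> R) -> R) t :
  finitely_lossless (f i) (xs i) L -> 0 <= t ->
  integrable_0t t (loop_supply i) /\
  L (q t i) = L (q 0 i) + integral_0t t (loop_supply i).
Proof.
move=> [_ lossless] t0.
have [int_supply balance] := lossless (q 0 i) _ (q_sol.1 i) t t0.
have supplyE s : `[0, t]%classic s -> dotv (closed_loop_input A f r q s i)
    (subv (f i (ld_state (q 0 i) (fun s => closed_loop_input A f r q s i) s)) (xs i))
    = loop_supply i s.
  rewrite /= in_itv /= => /andP[s0 _].
  by rewrite /loop_supply /strat_traj feedback_ld_state.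
split; first by apply: eq_integrable int_supply => // s /set_mem /supplyE /= ->.
rewrite -(feedback_ld_state i t t0) balance /integral_0t.
by congr (_ + _); apply: eq_Rintegral => s /set_mem; exact: supplyE.
Qed.

Lemma feedback_merged_lossless (L : forall i : 'I_m, ('I_(n i) -> R) -> R) t :
  constant_sum A -> nash_eq A xs -> fully_mixed xs -> (forall i p, in_simplex (f i p)) ->
  (forall i, finitely_lossless (f i) (xs i) (L i)) -> 0 <= t ->
  integrable_0t t (fun s => \sum_(i < m) dotv (r s i) (subv (strat_traj f q s i) (xs i))) /\
  merged_storage L (q t) = merged_storage L (q 0) +
    integral_0t t (fun s => \sum_(i < m) dotv (r s i) (subv (strat_traj f q s i) (xs i))).
Proof.
move=> Acs xs_nash xs_pos f_simplex lossless t0.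
have balance i := feedback_storage_balance i _ t (lossless i) t0.
rewrite -(funext (fun s => loop_supply_sum s Acs xs_nash xs_pos f_simplex)).
split; first by apply: integrable_Rsum => // i; exact: (balance i).1.
rewrite /integral_0t Rintegral_sum //; last by move=> i; exact: (balance i).1.
by rewrite /merged_storage -big_split; apply: eq_bigr => i _; exact: (balance i).2.
Qed.

End Feedback.

Arguments feedback_merged_lossless {R m n A xs f r q} q_sol {L t}.

Theorem corollaryC1 (R : realType) (m : nat) (n : 'I_m -> nat)
  (A : game R m n) (xs : profile R m n)
  (f : forall i : 'I_m, ('I_(n i) -> R) -> ('I_(n i) -> R))
  (L : forall i : 'I_m, ('I_(n i) -> R) -> R) :
  constant_sum A ->
  nash_eq A xs -> fully_mixed xs ->
  (forall i q, in_simplex (f i q)) ->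
  (forall i, finitely_lossless (f i) (xs i) (L i)) ->
  forall (r q : R -> profile R m n),
    (forall i, admissible_input (fun s => r s i)) ->
    feedback_solution A f r q ->
    (forall t, 0 <= t ->
      integrable_0t t (fun s => \sum_(i < m)
          dotv (r s i) (subv (strat_traj f q s i) (xs i))) /\
      merged_storage L (q t) =
        merged_storage L (q 0) +
        integral_0t t (fun s => \sum_(i < m)
          dotv (r s i) (subv (strat_traj f q s i) (xs i)))) /\
    ((forall s i j, r s i j = 0) ->
      forall t, 0 <= t -> merged_storage L (q t) = merged_storage L (q 0)).
Proof.
move=> Acs xs_nash xs_pos f_simplex lossless r q _ q_sol.
have balance t (t0 : 0 <= t) :=
  feedback_merged_lossless q_sol Acs xs_nash xs_pos f_simplex lossless t0.
split=> [|r0 t t0]; first exact: balance.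
rewrite (balance t t0).2 /integral_0t.
have -> : (fun s => \sum_(i < m) dotv (r s i) (subv (strat_traj f q s i) (xs i))) = fun=> 0.
  by apply/funext => s; apply: big1 => i _; apply: big1 => j _; rewrite r0 mul0r.
by rewrite Rintegral_cst // mul0r addr0.
Qed.
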